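(* For every integer $k\ge3$, there are infinitely many pairwise non-isomorphic connected $k$-regular highly-regular graphs which are not distance-regular.
   Context: A graph $\Gamma$ of order $n$ is highly-regular with collapsed adjacency matrix $C=[c_{i,j}]_{1\le i,j\le m}$, where $2\le m<n$ (the value $m=n$ allowed only when $n=2$), if for every vertex $u$ there is a partition of $V(\Gamma)$ into nonempty sets $V_1(u)=\{u\},\dots,V_m(u)$ such that every $y\in V_j(u)$ is adjacent to exactly $c_{i,j}$ vertices of $V_i(u)$. A connected graph is distance-regular if for all $u,v$ the numbers $|D_1(v)\cap D_{i-1}(u)|$, $|D_1(v)\cap D_i(u)|$, $|D_1(v)\cap D_{i+1}(u)|$ depend only on $i=d(u,v)$, where $D_i(u)=\{v:d(u,v)=i\}$. *)

From mathcomp Require Import all_boot.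
Unset Strict Implicit. Unset Printing Implicit Defensive.

Record graph := Graph { gn : nat; gadj : rel (ordinal gn) }.
Arguments gadj : clear implicits.

Definition simple (G : graph) : Prop :=
  (forall x y : 'I_(gn G), gadj G x y = gadj G y x) /\
  (forall x : 'I_(gn G), ~~ gadj G x x).

Definition nbhd {G : graph} (v : 'I_(gn G)) : {set 'I_(gn G)} :=
  [set w | gadj G v w].

Definition regular (G : graph) (k : nat) : Prop :=
  forall v : 'I_(gn G), #|nbhd v| = k.

Definition connected (G : graph) : Prop :=
  forall x y : 'I_(gn G), connect (gadj G) x y.

Fixpoint ball {G : graph} (i : nat) (u : 'I_(gn G)) : {set 'I_(gn G)} :=
  match i with
  | 0 => [set u]
  | j.+1 => ball j u :|: [set w | [exists x in ball j u, gadj G x w]]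
  end.

Definition sphere {G : graph} (i : nat) (u : 'I_(gn G)) : {set 'I_(gn G)} :=
  match i with
  | 0 => [set u]
  | j.+1 => ball j.+1 u :\: ball j u
  end.

Definition sphere_pred {G : graph} (i : nat) (u : 'I_(gn G)) : {set 'I_(gn G)} :=
  match i with
  | 0 => set0
  | j.+1 => sphere j u
  end.

Definition distance_regular (G : graph) : Prop :=
  connected G /\
  forall (i : nat) (u v u' v' : 'I_(gn G)),
    v \in sphere i u -> v' \in sphere i u' ->
    [/\ #|nbhd v :&: sphere_pred i u| = #|nbhd v' :&: sphere_pred i u'|,
        #|nbhd v :&: sphere i u| = #|nbhd v' :&: sphere i u'| &
        #|nbhd v :&: sphere i.+1 u| = #|nbhd v' :&: sphere i.+1 u'|].

(* Highly-regular with some collapsed adjacency matrix C (m x m, indices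
   shifted by one: index 0 stands for V_1). *)
Definition highly_regular (G : graph) : Prop :=
  exists (m : nat) (C : 'I_m -> 'I_m -> nat),
    2 <= m /\ (m < gn G \/ (m = gn G /\ gn G = 2)) /\
    forall u : 'I_(gn G), exists P : 'I_(gn G) -> 'I_m,
      (forall i : 'I_m, exists x, P x = i) /\
      (forall x, nat_of_ord (P x) = 0 <-> x = u) /\
      (forall (i j : 'I_m) (y : 'I_(gn G)), P y = j ->
          #|[set x | gadj G y x & P x == i]| = C i j).

Definition isomorphic (G H : graph) : Prop :=
  exists f : 'I_(gn G) -> 'I_(gn H),
    bijective f /\ forall x y, gadj H (f x) (f y) = gadj G x y.

From mathcomp Require Import all_boot ssralg finalg zmodp zify.
Import GRing.Theory.

(* Take the circulant graph on Z_n, n = (k - 1) N with N >= 4, whose connection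
   set S consists of 1, -1 and the k - 2 nonzero multiples of N; it is connected
   and k-regular. Translations and negation are automorphisms, so partitioning
   the vertices by their cyclic distance to u gives, for every u, an equitable
   partition with the same quotient matrix: the graph is highly regular. It is
   not distance-regular, because 2 and N + 1 are both at distance 2 from 0 while
   0 has exactly one common neighbour with 2 and at least two (1 and N) with
   N + 1. Varying N changes the order n. *)

Set Implicit Arguments.
Unset Strict Implicit.

Lemma modn_lt_double n a : a < n.*2 -> a %% n = if a < n then a else a - n.
Proof.
move=> ha; case: ltnP => han; first exact: modn_small.
by rewrite -{1}(subnK han) modnDr modn_small //; lia.
Qed.

Lemma val_subZp p (x y : 'I_p.+2) :
  (x - y)%R = (if y <= x then x - y else x + p.+2 - y) :> nat.
Proof.
have := ltn_ord x; have := ltn_ord y => ? ?.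
by rewrite /= !modn_lt_double; try lia; do ! case: ifP; lia.
Qed.

Lemma val_oppZp p (s : 'I_p.+2) : (- s)%R = (if s == 0%R then 0 else p.+2 - s) :> nat.
Proof.
have := ltn_ord s; rewrite -sub0r val_subZp -val_eqE /=.
by case: ifP; case: eqP; lia.
Qed.

Lemma ord_eqE m (x y : 'I_m) : (x == y) = (x == y :> nat).
Proof. by []. Qed.

Lemma val_Zp1 p : (1 : 'I_p.+2)%R = 1 :> nat.
Proof. by []. Qed.

Lemma val_ZpN1 p : (-1 : 'I_p.+2)%R = p.+1 :> nat.
Proof. by rewrite /= modn_small // subn1 modn_small. Qed.

Lemma val_natZp p m : m < p.+2 -> (m%:R : 'I_p.+2)%R = m :> nat.
Proof. by move=> lt_mp; rewrite Zp_nat /= modn_small. Qed.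

Lemma dvdn_leq_sub N x y : N %| x -> N %| y -> y < x -> N <= x - y.
Proof. by move=> dx dy lt_yx; apply: dvdn_leq; [lia | rewrite dvdn_sub]. Qed.

Lemma isomorphic_gn (G H : graph) : isomorphic G H -> gn G = gn H.
Proof. by case=> f [/bij_eq_card]; rewrite !card_ord. Qed.

Lemma ball1E (G : graph) (u w : 'I_(gn G)) :
  (w \in ball 1 u) = (w == u) || gadj G u w.
Proof.
rewrite /= !inE; congr orb; apply/existsP/idP => [[x /andP[]]|adj_uw].
  by rewrite inE => /eqP ->.
by exists u; rewrite inE eqxx.
Qed.

Lemma sphere1E (G : graph) (u : 'I_(gn G)) : simple G -> sphere 1 u = nbhd u.
Proof.
case=> _ irr; apply/setP => w; rewrite /sphere inE ball1E !inE.
by case: eqVneq => [->|]; rewrite ?(negbTE (irr u)).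
Qed.

Lemma sphere2I (G : graph) (u x v : 'I_(gn G)) :
  v \notin ball 1 u -> gadj G u x -> gadj G x v -> v \in sphere 2 u.
Proof.
move=> vNu adj_ux adj_xv; rewrite /sphere inE vNu /= inE; apply/orP; right.
by rewrite inE; apply/existsP; exists x; rewrite ball1E adj_ux orbT.
Qed.

Lemma distance_regular_common_nbhd (G : graph) (u v v' : 'I_(gn G)) :
  simple G -> distance_regular G -> v \in sphere 2 u -> v' \in sphere 2 u ->
  #|nbhd v :&: nbhd u| = #|nbhd v' :&: nbhd u|.
Proof.
move=> Gs [_ drG] hv hv'; have [] := drG 2 u v u v' hv hv'.
by rewrite /sphere_pred sphere1E.
Qed.

Section Circulant.

Variable p : nat.
Local Notation n := p.+2.
Implicit Types x y u s : 'I_n.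

Definition circulant (S : pred 'I_n) : graph := @Graph n (fun x y => S (y - x)%R).

Definition cnorm s : nat := minn s (n - s).

Lemma cnorm_le_half s : cnorm s <= n./2.
Proof. rewrite /cnorm; lia. Qed.

Lemma cnorm_eq0 s : (cnorm s == 0) = (s == 0%R).
Proof. by have := ltn_ord s; rewrite -val_eqE /cnorm /=; case: eqP; case: eqP; lia. Qed.

Lemma cnormN s : cnorm (- s)%R = cnorm s.
Proof. by have := ltn_ord s; rewrite /cnorm val_oppZp -val_eqE /=; case: eqP; lia. Qed.

Lemma cnorm_inj s t : cnorm s = cnorm t -> t = s \/ t = (- s)%R.
Proof.
move=> e; suff : t = s :> nat \/ t = (- s)%R :> nat by case=> /val_inj; auto.
have := ltn_ord s; have := ltn_ord t; move: e.
by rewrite /cnorm val_oppZp -val_eqE /=; case: eqP; lia.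
Qed.

Lemma cnorm_inord i : i <= n./2 -> cnorm (inord i) = i.
Proof. by move=> hi; rewrite /cnorm inordK; lia. Qed.

Section ConnectionSet.

Variable S : pred 'I_n.
Hypothesis S_sym : forall s, S (- s)%R = S s.

Lemma circulant_simple : ~~ S 0%R -> simple (circulant S).
Proof. by move=> S0; split=> [x y|x] /=; rewrite ?subrr // -opprB S_sym. Qed.

Lemma circulant_regular : regular (circulant S) #|S|.
Proof.
move=> v; rewrite -[RHS]cardsE -(card_preimset _ (addIr (- v)%R)).
by apply: eq_card => w; rewrite !inE.
Qed.

Lemma circulant_connected : S 1%R -> connected (circulant S).
Proof.
move=> S1; have reach x m : connect (gadj (circulant S)) x (x + 1 *+ m)%R.
  elim: m => [|m IHm]; first by rewrite addr0.
  apply: connect_trans IHm (connect1 _).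
  by rewrite /= mulrS addrCA addrK.
by move=> x y; have := reach x (y - x)%R; rewrite natr_Zp subrKC.
Qed.

Definition dclass u x : 'I_(n./2).+1 := inord (cnorm (x - u)%R).

Lemma dclassE u x : dclass u x = cnorm (x - u)%R :> nat.
Proof. by rewrite inordK // ltnS cnorm_le_half. Qed.

(* [x |-> x - u] or [x |-> u - x] is an automorphism sending [u] to 0 and [y]
   to the vertex [cnorm (y - u)] of the same class. *)
Lemma card_nbhd_dclass u y i :
  #|[set x | S (x - y)%R & dclass u x == i]|
  = #|[set x | S (x - inord (cnorm (y - u)%R))%R & dclass 0%R x == i]|.
Proof.
set c : 'I_n := inord _.
have : cnorm c = cnorm (y - u)%R by rewrite cnorm_inord ?cnorm_le_half.
case/cnorm_inj => e.
- rewrite -[RHS](card_preimset _ (addIr (- u)%R)); apply: eq_card => x.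
  by rewrite !inE -e opprB subrKA /dclass !subr0.
- have -> : c = (u - y)%R by rewrite -opprB e opprK.
  rewrite -[RHS](card_preimset _ (can_inj (subKr u))); apply: eq_card => x.
  rewrite !inE opprB [(u - x + _)%R]addrC subrKA -[(y - x)%R]opprB S_sym.
  by rewrite /dclass !subr0 -[(u - x)%R]opprB cnormN.
Qed.

Lemma circulant_highly_regular : highly_regular (circulant S).
Proof.
exists (n./2).+1, (fun i j => #|[set x | S (x - inord j)%R & dclass 0%R x == i]|).
split; first lia.
split; first by rewrite /=; case: (posnP p) => [->|?]; [right | left]; lia.
move=> u; exists (dclass u); split; [|split].
- move=> i; exists (u + inord i)%R; apply: val_inj => /=.
  by rewrite dclassE [(u + _)%R]addrC addrK cnorm_inord // -ltnS.
- move=> x; rewrite dclassE; split=> [/eqP|->]; last by rewrite subrr.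
  by rewrite cnorm_eq0 subr_eq0 => /eqP.
- by move=> i j y <-; rewrite /= card_nbhd_dclass dclassE.
Qed.

End ConnectionSet.

Definition conn_set (N : nat) : pred 'I_n :=
  fun s => [|| s == 1%R, s == (-1)%R | (N %| s) && (s != 0%R)].

Lemma conn_setE N s :
  conn_set N s = [|| s == 1 :> nat, s == n.-1 :> nat | (N %| s) && (s != 0 :> nat)].
Proof. by rewrite /conn_set !ord_eqE val_Zp1 val_ZpN1. Qed.

Lemma conn_set_sym N s : N %| n -> conn_set N (- s)%R = conn_set N s.
Proof.
move=> dN; rewrite /conn_set eqr_oppLR eqr_opp orbCA oppr_eq0.
congr (_ || (_ || _)); case: eqVneq => [->|s0]; rewrite ?andbF // !andbT.
by rewrite val_oppZp (negbTE s0) dvdn_subr // ltnW.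
Qed.

Lemma card_nonzero_multiples N a : n = a * N ->
  #|[set s : 'I_n | (N %| s) && (s != 0 :> nat)]| = a.-1.
Proof.
move=> hn; have N_gt0 : 0 < N by move: hn; case: N; rewrite ?muln0.
have lt_mul (j : 'I_a.-1) : j.+1 * N < n by have := ltn_ord j; nia.
have -> : [set s : 'I_n | (N %| s) && (s != 0 :> nat)] =
          [set inord (j.+1 * N) | j : 'I_a.-1].
  apply/setP => s; rewrite inE; apply/idP/imsetP => [/andP[/dvdnP[q hq] s0]|].
    have q_gt0 : 0 < q by move: s0; rewrite hq; case: q {hq}.
    have lt_q : q.-1 < a.-1.
      have : q < a by rewrite -(ltn_pmul2r N_gt0) -hq -hn.
      by rewrite -(ltn_predK q_gt0); lia.
    exists (Ordinal lt_q) => //; apply: (@ord_inj n).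
    by rewrite inordK ?(lt_mul (Ordinal lt_q)) //= prednK.
  by case=> j _ ->; rewrite inordK // dvdn_mull //=; lia.
rewrite card_imset ?card_ord // => i j /(congr1 (@nat_of_ord n)).
by rewrite !inordK // => /eqP; rewrite eqn_mul2r gtn_eqF //= eqSS => /eqP /ord_inj.
Qed.

Lemma card_conn_set N a : 3 <= N -> n = a * N -> #|conn_set N| = a.+1.
Proof.
move=> hN hn; have dN : N %| n by rewrite hn dvdn_mull.
have N1 : N %| 1 = false by apply/negbTE; rewrite dvdn1; lia.
have Nn1 : N %| n.-1 = false by rewrite -subn1 dvdn_subr.
rewrite (eq_card (_ : conn_set N =i
    1%R |: ((-1)%R |: [set s : 'I_n | (N %| s) && (s != 0 :> nat)]))); last first.
  by move=> s; rewrite !inE /conn_set !ord_eqE.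
rewrite !cardsU1 (card_nonzero_multiples hn) !inE !ord_eqE val_Zp1 val_ZpN1.
by rewrite N1 Nn1 /=; lia.
Qed.

Section NotDistanceRegular.

Variables N a : nat.
Hypotheses (hN : 4 <= N) (ha : 2 <= a) (hn : n = a * N).

Local Notation G := (circulant (conn_set N)).

Let dN : N %| n. Proof. by rewrite hn dvdn_mull. Qed.

Let dvdn_nsub d : 0 < d < N -> N %| n - d = false.
Proof. by move=> hd; rewrite dvdn_subr //; [rewrite gtnNdvd //; lia | nia]. Qed.

Lemma conn_set_val s m : s = m :> nat ->
  conn_set N s = [|| m == 1, m == n.-1 | (N %| m) && (m != 0)].
Proof. by move=> sm; rewrite conn_setE sm. Qed.

Lemma conn_set_nbhd2 x : conn_set N x -> conn_set N (x - 2%:R)%R -> x = 1%R.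
Proof.
move=> Sx Sx2; apply: (@ord_inj n); rewrite val_Zp1; have xn := ltn_ord x.
have v2 : (2%:R : 'I_n)%R = 2 :> nat by rewrite val_natZp //; nia.
move: Sx Sx2; rewrite conn_setE => /or3P[/eqP // | /eqP x_n1 | /andP[dx x0]].
- rewrite (@conn_set_val _ (n - 3)); last by rewrite val_subZp v2 x_n1; case: ifP; lia.
  by rewrite dvdn_nsub; lia.
- have x_ge : N <= x by apply: dvdn_leq; lia.
  rewrite (@conn_set_val _ (x - 2)); last by rewrite val_subZp v2; case: ifP; lia.
  have -> : N %| x - 2 = false by apply/negP => /(dvdn_leq_sub dx); lia.
  lia.
Qed.

Lemma conn_set_not_distance_regular : ~ distance_regular G.
Proof.
move=> drG; have S_sym s : conn_set N (- s)%R = conn_set N s by exact: conn_set_sym.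
have Gs : simple G.
  by apply: circulant_simple; rewrite // conn_setE /=; lia.
have vN : (N%:R : 'I_n)%R = N :> nat by rewrite val_natZp //; nia.
have vN1 : (N.+1%:R : 'I_n)%R = N.+1 :> nat by rewrite val_natZp //; nia.
have v2 : (2%:R : 'I_n)%R = 2 :> nat by rewrite val_natZp //; nia.
have S1 : conn_set N 1%R by rewrite /conn_set eqxx.
have SN : conn_set N N%:R%R by rewrite (conn_set_val vN) dvdnn; nia.
have in_sphere2 v : v != 0%R -> ~~ conn_set N v -> conn_set N (v - 1)%R ->
    v \in sphere (G := G) 2 0%R.
  move=> v0 nSv Sv1; apply: (@sphere2I G 0%R 1%R) => //.
  - by rewrite ball1E /= subr0 negb_or v0.
  - by rewrite /= subr0.
have hv : (2%:R : 'I_n)%R \in sphere (G := G) 2 0%R.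
  apply: in_sphere2.
  - by rewrite ord_eqE v2.
  - by rewrite (conn_set_val v2) gtnNdvd //; nia.
  - by rewrite mulrSr addrK mulr1n.
have hv' : (N.+1%:R : 'I_n)%R \in sphere (G := G) 2 0%R.
  apply: in_sphere2.
  - by rewrite ord_eqE vN1.
  - rewrite (conn_set_val vN1) -addn1 dvdn_addr // gtnNdvd //=; nia.
  - by rewrite mulrSr addrK.
have c2_le : #|nbhd (G := G) 2%:R%R :&: nbhd (G := G) 0%R| <= 1.
  rewrite -[X in _ <= X](cards1 (1%R : 'I_n)); apply/subset_leq_card/subsetP => x.
  rewrite !inE /= subr0 => /andP[S2x Sx].
  by rewrite (conn_set_nbhd2 Sx S2x).
have c2'_ge : 2 <= #|nbhd (G := G) N.+1%:R%R :&: nbhd (G := G) 0%R|.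
  have <- : #|[set (1 : 'I_n)%R; N%:R%R]| = 2.
    by rewrite cards2 ord_eqE val_Zp1 vN; case: eqP; lia.
  apply/subset_leq_card/subsetP => x; rewrite !inE /= subr0 => /orP[] /eqP ->.
  - by rewrite S1 mulrSr opprD addrCA subrr addr0 S_sym SN.
  - by rewrite SN mulrSr opprD addrA subrr add0r /conn_set eqxx orbT.
have := distance_regular_common_nbhd Gs drG hv hv'; lia.
Qed.

End NotDistanceRegular.

End Circulant.

Theorem theoremA4 (k : nat) (hk : 3 <= k) :
  exists F : nat -> graph,
    (forall t, [/\ simple (F t), connected (F t), regular (F t) k,
                  highly_regular (F t) & ~ distance_regular (F t)]) /\
    (forall s t, s <> t -> ~ isomorphic (F s) (F t)).
Proof.
exists (fun t => circulant (p := (k.-1 * (t + 4)).-2) (conn_set (t + 4))).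
split=> [t|s t st /isomorphic_gn /=]; last by nia.
have hn : (k.-1 * (t + 4)).-2.+2 = k.-1 * (t + 4) by nia.
have dN : t + 4 %| (k.-1 * (t + 4)).-2.+2 by rewrite hn dvdn_mull.
have conn_sym := fun s => conn_set_sym s dN.
split.
- by apply: circulant_simple; rewrite // conn_setE /=; lia.
- exact: circulant_connected.
- by move=> v; rewrite circulant_regular (card_conn_set _ hn) ?prednK //; lia.
- exact: circulant_highly_regular.
- by apply: (conn_set_not_distance_regular _ _ hn); lia.
Qed.
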